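(* Let $\alpha\in(0,1)$, $p=1$, and $\frac1q=1-\frac\alpha n$. Then for every $f$ with $\|f\|_{W^{\alpha,1}}<\infty$, \[ \|f\|_{GaRo_q}\le n^{(n+\alpha)/2}\|f\|_{W^{\alpha,1}}. \]
   Context: $Q_0=(0,1)^n$; cubes are subcubes of $Q_0$ with sides parallel to the axes. $P$ is the set of countable families $\{Q_i\}_{i\in I}$ of subcubes of $Q_0$ with pairwise disjoint interiors. $\|f\|_{W^{\alpha,1}}=\int_{Q_0}\int_{Q_0}\frac{|f(x)-f(y)|}{|x-y|^{n+\alpha}}\,dx\,dy$. For $1<q<\infty$, $1/q+1/q'=1$, \[ \|f\|_{GaRo_q}=\sup_{\{Q_i\}\in P}\frac{\sum_{i}\frac1{|Q_i|}\int_{Q_i}\int_{Q_i}|f(x)-f(y)|\,dx\,dy}{(\sum_i|Q_i|)^{1/q'}}. \] *)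

From HB Require Import structures.
From mathcomp Require Import all_boot all_order all_algebra.
From mathcomp Require Import all_classical all_reals all_analysis.
Set Implicit Arguments. Unset Strict Implicit. Unset Printing Implicit Defensive.
Import Order.TTheory GRing.Theory Num.Theory.
Local Open Scope classical_set_scope.
Local Open Scope ring_scope.

(* Points of R^n are n-tuples of reals; n.-tuple R carries the product
   (Borel) sigma-algebra generated by the coordinate projections. *)

(* n-dimensional Lebesgue integral of a nonnegative function, defined as the
   iterated one-dimensional Lebesgue integral (Tonelli: it coincides with the
   integral w.r.t. n-dimensional Lebesgue measure for nonnegative measurable
   integrands). *)
Fixpoint iint (R : realType) (n : nat) : (n.-tuple R -> \bar R) -> \bar R :=
  match n return (n.-tuple R -> \bar R) -> \bar R with
  | 0 => fun g => g [tuple]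
  | m.+1 => fun g =>
      (\int[@lebesgue_measure R]_(x in [set: R])
         iint (fun t : m.-tuple R => g (cons_tuple x t)))%E
  end.

Definition setint (R : realType) (n : nat) (A : set (n.-tuple R))
  (g : n.-tuple R -> \bar R) : \bar R :=
  iint (fun x => if x \in A then g x else 0%E).

Definition cube (R : realType) (n : nat) (a : n.-tuple R) (l : R)
  : set (n.-tuple R) :=
  [set x | forall i : 'I_n, tnth a i < tnth x i < tnth a i + l].

Definition Q0 (R : realType) (n : nat) : set (n.-tuple R) :=
  cube [tuple (0:R) | i < n] 1.

Definition edist (R : realType) (n : nat) (x y : n.-tuple R) : R :=
  Num.sqrt (\sum_(i < n) (tnth x i - tnth y i) ^+ 2).

Definition W_alpha1 (R : realType) (n : nat) (alpha : R)
  (f : n.-tuple R -> R) : \bar R :=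
  setint (@Q0 R n) (fun x => setint (@Q0 R n) (fun y =>
    (`|f x - f y| / (edist x y) `^ (n%:R + alpha))%:E)).

(* {Q_i}_{i in I} (I a countable nonempty index set, cube i = cube (a i) (l i))
   is a family of subcubes of Q_0 with pairwise disjoint interiors *)
Definition admissible (R : realType) (n : nat) (I : set nat)
  (a : nat -> n.-tuple R) (l : nat -> R) : Prop :=
  I !=set0 /\
  (forall i, I i -> 0 < l i /\ cube (a i) (l i) `<=` @Q0 R n) /\
  (forall i j, I i -> I j -> i <> j ->
     cube (a i) (l i) `&` cube (a j) (l j) = set0).

(* the quotient in the definition of ||f||_{GaRo_q}; |Q_i| = l_i^n *)
Definition GaRo_quot (R : realType) (n : nat) (q' : R) (f : n.-tuple R -> R)
  (I : set nat) (a : nat -> n.-tuple R) (l : nat -> R) : \bar R :=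
  ((\esum_(i in I)
      (((l i) ^+ n)^-1)%:E *
      setint (cube (a i) (l i)) (fun x => setint (cube (a i) (l i))
        (fun y => (`|f x - f y|)%:E)))
   / ((fine (\esum_(i in I) ((l i) ^+ n)%:E)) `^ (q'^-1))%:E)%E.

Definition GaRo (R : realType) (n : nat) (q' : R) (f : n.-tuple R -> R)
  : \bar R :=
  ereal_sup [set r | exists (I : set nat) (a : nat -> n.-tuple R) (l : nat -> R),
      admissible I a l /\ r = GaRo_quot q' f I a l].

From Pilot Require Import Defs.
From HB Require Import structures.
From mathcomp Require Import all_boot all_order all_algebra.
From mathcomp Require Import all_classical all_reals all_analysis.
From mathcomp Require Import lra.
Import Defs.
Import Order.TTheory GRing.Theory Num.Theory.
Import HBNNSimple.
Set Implicit Arguments.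
Unset Strict Implicit.
Unset Printing Implicit Defensive.
Local Open Scope classical_set_scope.
Local Open Scope ring_scope.

(* On a cube Q of side l two points are at distance at most sqrt(n) l, so
   |f x - f y| <= (sqrt(n) l)^(n+alpha) k(x,y) with k the Gagliardo kernel, and
   |Q|^-1 \int_Q\int_Q |f x - f y| <= n^((n+alpha)/2) l^alpha \int_Q\int_Q k.
   For a family of disjoint cubes Q_i in Q_0 with total volume s <= 1 we have
   l_i^n <= s, hence l_i^alpha <= s^(alpha/n) = s^(1/q'); and the products
   Q_i x Q_i are disjoint subsets of Q_0 x Q_0, so the sum over i of the double
   integrals of k is at most ||f||_{W^{alpha,1}}. Dividing by s^(1/q') gives
   the bound for every admissible family. *)

(* The iterated integrals of Defs are applied to functions that are not known
   to be measurable, so these facts are derived directly from the definition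
   of the integral as a supremum over simple functions. *)
Section nonmeasurable_integralT.
Local Open Scope ereal_scope.
Context d (T : measurableType d) (R : realType).
Variable mu : {measure set T -> \bar R}.

Lemma ge0_le_integralT (f g : T -> \bar R) :
  (forall x, 0 <= f x) -> (forall x, f x <= g x) ->
  \int[mu]_(x in [set: T]) f x <= \int[mu]_(x in [set: T]) g x.
Proof.
move=> f0 fg; have g0 x : 0 <= g x by apply: le_trans (fg x).
rewrite !ge0_integralTE//; apply: ge_ereal_sup => _ [h hf <-].
by apply: ereal_sup_ubound; exists h => // x; apply: le_trans (fg x).
Qed.

Lemma ge0_integralT_superadditive (f g : T -> \bar R) :
  (forall x, 0 <= f x) -> (forall x, 0 <= g x) ->
  \int[mu]_(x in [set: T]) f x + \int[mu]_(x in [set: T]) g x <=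
  \int[mu]_(x in [set: T]) (f x + g x).
Proof.
move=> f0 g0; have fg0 x : 0 <= f x + g x by rewrite adde_ge0.
rewrite !ge0_integralTE//.
set Sf := ereal_sup _; set Sg := ereal_sup _; set Sfg := ereal_sup _.
have Sg_le : Sg <= Sfg.
  apply: ge_ereal_sup => _ [h hg <-]; apply: ereal_sup_ubound; exists h => //= x.
  by apply: le_trans (hg x) _; rewrite leeDr.
have Sg0 : 0 <= Sg.
  by apply: ereal_sup_ubound; exists nnsfun0 => //; exact: sintegral0.
have [->|Sfg_oo] := eqVneq Sfg +oo; first by rewrite leey.
have Sfg_fin : Sfg \is a fin_num.
  by rewrite ge0_fin_numE ?ltey// (le_trans Sg0).
have Sg_fin : Sg \is a fin_num by rewrite ge0_fin_numE// (le_lt_trans Sg_le)// ltey.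
rewrite -leeBrDr//; apply: ge_ereal_sup => _ [h1 h1f <-].
have h1_le : sintegral mu h1 <= Sfg.
  apply: ereal_sup_ubound; exists h1 => //= x.
  by apply: le_trans (h1f x) _; rewrite leeDl.
have h1_fin : sintegral mu h1 \is a fin_num.
  by rewrite ge0_fin_numE ?sintegral_ge0// (le_lt_trans h1_le)// ltey.
rewrite leeBrDr// -leeBrDl//; apply: ge_ereal_sup => _ [h2 h2g <-].
rewrite leeBrDl// -sintegralD; apply: ereal_sup_ubound.
by exists (add_nnsfun h1 h2) => //= x; rewrite EFinD; exact: leeD.
Qed.

Lemma ge0_integralTZl_le (c : R) (f : T -> \bar R) : (0 < c)%R ->
  (forall x, 0 <= f x) ->
  \int[mu]_(x in [set: T]) (c%:E * f x) <= c%:E * \int[mu]_(x in [set: T]) f x.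
Proof.
move=> c0 f0; have cf0 x : 0 <= c%:E * f x by rewrite mule_ge0// lee_fin ltW.
rewrite !ge0_integralTE//; apply: ge_ereal_sup => _ [h hf <-].
have ic0 : (0 <= c^-1)%R by rewrite invr_ge0 ltW.
have -> : sintegral mu h = c%:E * sintegral mu (cst c^-1 \* h)%R.
  by rewrite sintegralrM muleA -EFinM divff ?gt_eqF// mul1e.
apply: lee_wpmul2l; first by rewrite lee_fin ltW.
apply: ereal_sup_ubound.
exists (scale_nnsfun h ic0) => //= x.
rewrite EFinM; apply: le_trans (lee_wpmul2l _ (hf x)) _; first by rewrite lee_fin.
by rewrite muleA -EFinM mulVf ?gt_eqF// mul1e.
Qed.

End nonmeasurable_integralT.

Section iterated_integral.
Local Open Scope ereal_scope.
Context (R : realType).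

Lemma iint_ge0 n (g : n.-tuple R -> \bar R) :
  (forall x, 0 <= g x) -> 0 <= iint g.
Proof.
elim: n g => [|m IH] g g0 /=; first exact: g0.
by apply: integral_ge0 => x _; apply: IH => t; exact: g0.
Qed.

Lemma le_iint n (g h : n.-tuple R -> \bar R) :
  (forall x, 0 <= g x) -> (forall x, g x <= h x) -> iint g <= iint h.
Proof.
elim: n g h => [|m IH] g h g0 gh /=; first exact: gh.
by apply: ge0_le_integralT => x; [apply: iint_ge0 | apply: IH].
Qed.

Lemma iint_superadditive n (g h : n.-tuple R -> \bar R) :
  (forall x, 0 <= g x) -> (forall x, 0 <= h x) ->
  iint g + iint h <= iint (fun x => g x + h x).
Proof.
elim: n g h => [|m IH] g h g0 h0 //=.
apply: le_trans (ge0_integralT_superadditive _ _ _) _;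
  try by move=> x; apply: iint_ge0.
apply: ge0_le_integralT => x; last exact: IH.
by rewrite adde_ge0 // iint_ge0.
Qed.

Lemma iintZl_le n (c : R) (g : n.-tuple R -> \bar R) : (0 < c)%R ->
  (forall x, 0 <= g x) -> iint (fun x => c%:E * g x) <= c%:E * iint g.
Proof.
elim: n g => [|m IH] g c0 g0 //=.
apply: le_trans (ge0_integralTZl_le _ c0 _); last by move=> x; apply: iint_ge0.
apply: ge0_le_integralT => x; last exact: IH.
by apply: iint_ge0 => t; rewrite mule_ge0// lee_fin ltW.
Qed.

Lemma iint0 n : iint (fun _ : n.-tuple R => 0) = 0.
Proof.
elim: n => [|m IH] //=.
by rewrite (_ : (fun x => _) = cst 0) ?integral0//; apply: funext => x; rewrite IH.
Qed.

Lemma sum_iint_le n (I : Type) (s : seq I) (g : I -> n.-tuple R -> \bar R) :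
  (forall i x, 0 <= g i x) ->
  \sum_(i <- s) iint (g i) <= iint (fun x => \sum_(i <- s) g i x).
Proof.
move=> g0; elim: s => [|i s IH].
  rewrite big_nil (_ : (fun x => _) = fun _ => 0) ?iint0//.
  by apply: funext => x; rewrite big_nil.
rewrite big_cons (_ : (fun x => _) = fun x => g i x + \sum_(j <- s) g j x).
  apply: le_trans (iint_superadditive (g0 i) _); first by rewrite leeD2l.
  by move=> x; rewrite sume_ge0.
by apply: funext => x; rewrite big_cons.
Qed.

Lemma setint_ge0 n (A : set (n.-tuple R)) (g : n.-tuple R -> \bar R) :
  (forall x, 0 <= g x) -> 0 <= setint A g.
Proof. by move=> g0; apply: iint_ge0 => x; case: ifP. Qed.

Lemma le_setint n (A : set (n.-tuple R)) (g h : n.-tuple R -> \bar R) :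
  (forall x, 0 <= g x) -> (forall x, A x -> g x <= h x) ->
  setint A g <= setint A h.
Proof.
move=> g0 gh; apply: le_iint => x; first by case: ifP.
by case: ifPn => // /set_mem /gh.
Qed.

Lemma setintZl_le n (A : set (n.-tuple R)) (c : R) (g : n.-tuple R -> \bar R) :
  (0 < c)%R -> (forall x, 0 <= g x) ->
  setint A (fun x => c%:E * g x) <= c%:E * setint A g.
Proof.
move=> c0 g0; have gA0 x : 0 <= (if x \in A then g x else 0) by case: ifP.
apply: le_trans (iintZl_le c0 gA0); apply: le_iint => x.
  by case: ifP => // _; rewrite mule_ge0// lee_fin ltW.
by case: ifP; rewrite ?mule0.
Qed.

End iterated_integral.

Section cubes.
Context (R : realType).

Lemma in_cube_cons m (a : m.+1.-tuple R) l (x : R) (t : m.-tuple R) :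
  (cons_tuple x t \in cube a l) =
  (x \in `]tnth a ord0, tnth a ord0 + l[%classic) &&
  (t \in cube (behead_tuple a) l).
Proof.
apply/idP/andP => [|[]].
  rewrite in_setE /= => H; split.
    by rewrite in_setE /= in_itv /=; have := H ord0; rewrite (tnth_nth 0).
  rewrite in_setE /= => j; have := H (lift ord0 j).
  by rewrite !(tnth_nth 0) /= nth_behead.
rewrite !in_setE /= in_itv /= => H1 H2 i.
case: (unliftP ord0 i) => [j ->|->]; last by rewrite !(tnth_nth 0) in H1 *.
by have := H2 j; rewrite !(tnth_nth 0) /= nth_behead.
Qed.

Lemma setint_cube1 n (a : n.-tuple R) (l : R) : 0 < l ->
  setint (cube a l) (fun=> 1%E) = (l ^+ n)%:E.
Proof.
rewrite /setint => l0; elim: n a => [|m IH] a /=.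
  by have -> : [tuple] \in cube a l by rewrite in_setE => -[].
set I := `]tnth a ord0, tnth a ord0 + l[%classic.
rewrite (_ : (fun x => _) = ((cst (l ^+ m)%:E) \_ I)); last first.
  apply: funext => x; rewrite /patch; under eq_fun do rewrite in_cube_cons.
  by case: (x \in I) => /=; [exact: IH | exact: iint0].
rewrite -integral_mkcond integral_cst; last exact: measurable_itv.
have muI : lebesgue_measure I = l%:E.
  by rewrite lebesgue_measure_itv/= lte_fin ltrDl l0 -EFinD addrAC subrr add0r.
by rewrite [X in (_ * X)%E]muI -EFinM exprS mulrC.
Qed.

Lemma edist_eq0 n (x y : n.-tuple R) : edist x y = 0 -> x = y.
Proof.
move=> /eqP; rewrite /edist sqrtr_eq0 => sum_le0.
have sum0 : \sum_(i < n) (tnth x i - tnth y i) ^+ 2 = 0.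
  by apply/eqP; rewrite eq_le sum_le0 sumr_ge0// => i _; rewrite sqr_ge0.
apply: eq_from_tnth => i.
have /eqP := @psumr_eq0P _ _ _ _ (fun i _ => sqr_ge0 (tnth x i - tnth y i)) sum0 i isT.
by rewrite sqrf_eq0 subr_eq0 => /eqP.
Qed.

Lemma edist_cube_le n (a : n.-tuple R) l x y : 0 <= l ->
  cube a l x -> cube a l y -> edist x y <= Num.sqrt n%:R * l.
Proof.
move=> l0 hx hy; rewrite -(ger0_norm l0) -sqrtr_sqr /edist -sqrtrM//.
rewrite ler_sqrt ?mulr_ge0 ?sqr_ge0//.
apply: le_trans (_ : \sum_(i < n) l ^+ 2 <= _).
  apply: ler_sum => i _.
  by have /andP[x1 x2] := hx i; have /andP[y1 y2] := hy i; nra.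
by rewrite big_const_ord iter_addr_0 mulr_natl.
Qed.

Lemma cube_diff_le_kernel n (a : n.-tuple R) l p (f : n.-tuple R -> R) x y :
  0 <= p -> 0 <= l -> cube a l x -> cube a l y ->
  `|f x - f y| <= (Num.sqrt n%:R * l) `^ p * (`|f x - f y| / edist x y `^ p).
Proof.
move=> p0 l0 hx hy.
have [/edist_eq0 ->|d0] := eqVneq (edist x y) 0.
  by rewrite subrr normr0 mul0r mulr0.
have dp : 0 < edist x y by rewrite lt_def d0 sqrtr_ge0.
rewrite mulrA ler_pdivlMr ?powR_gt0// [X in _ <= X]mulrC.
rewrite ler_wpM2l// ge0_ler_powR ?nnegrE ?sqrtr_ge0 ?mulr_ge0 ?sqrtr_ge0//.
exact: edist_cube_le.
Qed.

End cubes.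

Section exponents.
Context (R : realType).

Lemma powR_diam_div_volume n (l p : R) : 0 < l ->
  (l ^+ n)^-1 * (Num.sqrt n%:R * l) `^ (n%:R + p) =
  n%:R `^ ((n%:R + p) / 2) * l `^ p.
Proof.
move=> l0.
rewrite powRM ?sqrtr_ge0 ?ltW// -powR12_sqrt// -powRrM powRD; last first.
  by rewrite (gt_eqF l0) implybT.
rewrite powR_mulrn ?ltW// [2^-1 * _]mulrC mulrCA !mulrA divfK//.
by rewrite expf_neq0// gt_eqF.
Qed.

Lemma powR_le_of_exprn_le n (l s p : R) : (0 < n)%N -> 0 < l -> 0 <= p ->
  l ^+ n <= s -> l `^ p <= s `^ (p / n%:R).
Proof.
move=> n0 l0 p0 ls.
have -> : l `^ p = (l ^+ n) `^ (p / n%:R).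
  by rewrite -powR_mulrn ?ltW// -powRrM mulrCA divff ?mulr1// pnatr_eq0 -lt0n.
have ln0 : 0 <= l ^+ n by rewrite exprn_ge0 ?ltW.
by rewrite ge0_ler_powR ?nnegrE ?divr_ge0 ?(le_trans ln0 ls).
Qed.

End exponents.

Section sums_over_disjoint_cubes.
Local Open Scope ereal_scope.
Context (R : realType).

Lemma sum_mkcond_disjoint_le (T : Type) (J : eqType) (s : seq J)
    (A : J -> set T) (G : J -> T -> \bar R) (b : \bar R) x :
  uniq s -> (forall i j, i \in s -> j \in s -> i <> j -> A i `&` A j = set0) ->
  (forall i, i \in s -> A i x -> G i x <= b) -> 0 <= b ->
  \sum_(i <- s) (if x \in A i then G i x else 0) <= b.
Proof.
move=> us dis GB b0.
have [/hasP[j js xAj]|/hasPn xA] := boolP (has (fun i => x \in A i) s).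
  rewrite (bigD1_seq j)//= xAj big1_seq ?adde0; first exact/GB/set_mem.
  move=> i /andP[ij iS]; case: ifPn => // /set_mem xAi.
  have : (A i `&` A j) x by split=> //; exact: set_mem.
  by rewrite dis//; apply/eqP.
by rewrite big1_seq// => i /andP[_ /xA /negbTE ->].
Qed.

Lemma esumZl_le (J : choiceType) (I : set J) (c : R) (a : J -> \bar R) :
  (0 <= c)%R -> (forall i, 0 <= a i) ->
  \esum_(i in I) (c%:E * a i) <= c%:E * \esum_(i in I) a i.
Proof.
move=> c0 a0; apply: ge_ereal_sup => _ [F IF <-].
rewrite -ge0_mule_fsumr// lee_wpmul2l ?lee_fin//.
by apply: ereal_sup_ubound; exists F.
Qed.

Lemma subset_setint n (A B : set (n.-tuple R)) (g : n.-tuple R -> \bar R) :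
  A `<=` B -> (forall x, 0 <= g x) -> setint A g <= setint B g.
Proof.
move=> AB g0; apply: le_iint => x; first by case: ifP.
case: ifPn => [xA|_]; last by case: ifP.
by rewrite mem_set//; apply/AB/set_mem.
Qed.

Lemma esum_setint_le n (J : choiceType) (I : set J) (A : J -> set (n.-tuple R))
    (B : set (n.-tuple R)) (G : J -> n.-tuple R -> \bar R) (g : n.-tuple R -> \bar R) :
  (forall i j, I i -> I j -> i <> j -> A i `&` A j = set0) ->
  (forall i, I i -> A i `<=` B) ->
  (forall i x, 0 <= G i x) -> (forall x, 0 <= g x) ->
  (forall i x, I i -> A i x -> G i x <= g x) ->
  \esum_(i in I) setint (A i) (G i) <= setint B g.
Proof.
move=> dis AB G0 g0 Gg; apply: ge_ereal_sup => _ [F [finF FI] <-].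
rewrite fsbig_finite//=; set s := finmap.enum_fset _.
have sI i : i \in s -> I i by move=> iS; apply: FI; move: iS; rewrite in_fset_set// inE.
apply: le_trans (sum_iint_le _ _) _; first by move=> i x; case: ifP.
apply: le_iint => x; first by rewrite sume_ge0// => i _; case: ifP.
apply: sum_mkcond_disjoint_le; first exact: finmap.fset_uniq.
- by move=> i j /sI Ii /sI Ij; exact: dis.
- by move=> i /sI Ii Aix; rewrite mem_set; [exact: Gg | exact: AB Aix].
- by case: ifP.
Qed.

End sums_over_disjoint_cubes.

Definition gagliardo_kernel (R : realType) n (f : n.-tuple R -> R) (p : R)
  (x y : n.-tuple R) : \bar R := (`|f x - f y| / edist x y `^ p)%:E.

Section gagliardo_bound.
Local Open Scope ereal_scope.
Context (R : realType) (n : nat) (f : n.-tuple R -> R).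
Local Notation kernel := (gagliardo_kernel f).

Lemma gagliardo_kernel_ge0 p x y : 0 <= kernel p x y.
Proof. by rewrite lee_fin divr_ge0 ?powR_ge0. Qed.

Let inner_ge0 p (A : set (n.-tuple R)) x : 0 <= setint A (kernel p x).
Proof. by apply: setint_ge0 => y; exact: gagliardo_kernel_ge0. Qed.

Let energy_ge0 p (A : set (n.-tuple R)) :
  0 <= setint A (fun x => setint A (kernel p x)).
Proof. by apply: setint_ge0 => x; exact: inner_ge0. Qed.

Lemma cube_oscillation_le (a : n.-tuple R) (l p : R) : (0 < n)%N ->
  (0 < l)%R -> (0 <= p)%R ->
  setint (cube a l) (fun x => setint (cube a l) (fun y => (`|f x - f y|)%:E))
  <= ((Num.sqrt n%:R * l) `^ p)%:E *
     setint (cube a l) (fun x => setint (cube a l) (kernel p x)).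
Proof.
move=> n0 l0 p0; set c := ((Num.sqrt n%:R * l) `^ p)%R.
have c0 : (0 < c)%R by rewrite powR_gt0// mulr_gt0// sqrtr_gt0 ltr0n.
apply: le_trans (setintZl_le _ c0 (inner_ge0 p _)).
apply: le_setint => [x|x Cx]; first by apply: setint_ge0 => y; rewrite lee_fin.
apply: le_trans (setintZl_le _ c0 (gagliardo_kernel_ge0 p x)).
apply: le_setint => [y|y Cy]; first by rewrite lee_fin.
by rewrite /gagliardo_kernel -EFinM lee_fin (cube_diff_le_kernel f p0 (ltW l0) Cx Cy).
Qed.

Lemma esum_cube_volume_le1 I (a : nat -> n.-tuple R) l :
  admissible I a l -> \esum_(i in I) (l i ^+ n)%:E <= 1.
Proof.
move=> [_ [Hl dis]].
have -> : 1 = setint (@Q0 R n) (fun=> 1) by rewrite setint_cube1 ?expr1n.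
rewrite (eq_esum (fun i Ii => esym (setint_cube1 (a i) (Hl i Ii).1))).
by apply: esum_setint_le => // i Ii; exact: (Hl i Ii).2.
Qed.

Lemma esum_cube_energy_le alpha I (a : nat -> n.-tuple R) l :
  admissible I a l ->
  \esum_(i in I) setint (cube (a i) (l i))
    (fun x => setint (cube (a i) (l i)) (kernel (n%:R + alpha) x))
  <= W_alpha1 alpha f.
Proof.
move=> [_ [Hl dis]]; apply: esum_setint_le => [//|i Ii|i x|x|i x Ii _].
- exact: (Hl i Ii).2.
- exact: inner_ge0.
- exact: inner_ge0.
- exact/subset_setint/gagliardo_kernel_ge0/(Hl i Ii).2.
Qed.

Lemma GaRo_numerator_le alpha I (a : nat -> n.-tuple R) l (s : R) :
  (0 < n)%N -> (0 < alpha)%R -> admissible I a l ->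
  (forall i, I i -> (l i ^+ n <= s)%R) ->
  \esum_(i in I) (((l i ^+ n)^-1)%:E * setint (cube (a i) (l i))
    (fun x => setint (cube (a i) (l i)) (fun y => (`|f x - f y|)%:E)))
  <= (n%:R `^ ((n%:R + alpha) / 2) * s `^ (alpha / n%:R))%:E * W_alpha1 alpha f.
Proof.
move=> n0 a0 adm ls; have [_ [Hl _]] := adm.
set N := (n%:R `^ _)%R; set t := (s `^ _)%R.
have p0 : (0 <= n%:R + alpha)%R by rewrite addr_ge0 ?ler0n ?ltW.
apply: le_trans (_ : \esum_(i in I) ((N * t)%:E * setint (cube (a i) (l i))
    (fun x => setint (cube (a i) (l i)) (kernel (n%:R + alpha) x))) <= _).
  apply: le_esum => i Ii; have [li0 _] := Hl i Ii.
  apply: le_trans (lee_wpmul2l _ (cube_oscillation_le _ n0 li0 p0)) _.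
    by rewrite lee_fin invr_ge0 exprn_ge0 ?ltW.
  rewrite muleA -EFinM powR_diam_div_volume// lee_wpmul2r// lee_fin.
  by apply: ler_wpM2l; [exact: powR_ge0 | exact: powR_le_of_exprn_le (ltW a0) (ls i Ii)].
have Nt0 : (0 <= N * t)%R by rewrite mulr_ge0 ?powR_ge0.
apply: le_trans (esumZl_le _ Nt0 _) _ => [i|]; first exact: energy_ge0.
by rewrite lee_wpmul2l ?lee_fin// esum_cube_energy_le.
Qed.

Lemma GaRo_quot_le (alpha q' : R) I (a : nat -> n.-tuple R) l :
  (0 < n)%N -> (0 < alpha)%R -> (q'^-1 = alpha / n%:R)%R -> admissible I a l ->
  GaRo_quot q' f I a l <= (n%:R `^ ((n%:R + alpha) / 2))%:E * W_alpha1 alpha f.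
Proof.
move=> n0 a0 hq' adm; have [[j Ij] [Hl _]] := adm.
rewrite /GaRo_quot hq'; set S := \esum_(i in I) (l i ^+ n)%:E.
have S0 : 0 <= S by apply: esum_ge0 => i Ii; rewrite lee_fin exprn_ge0 ?ltW ?(Hl i Ii).1.
have S_fin : S \is a fin_num.
  by rewrite ge0_fin_numE// (le_lt_trans (esum_cube_volume_le1 adm)) ?ltey.
have ls i : I i -> (l i ^+ n <= fine S)%R.
  move=> Ii; rewrite -lee_fin fineK//; apply: esum_ge; exists [set i].
    by split; [exact: finite_set1 | move=> _ ->].
  by rewrite fsbig_set1.
have S_gt0 : (0 < fine S)%R by rewrite (lt_le_trans _ (ls j Ij)) ?exprn_gt0 ?(Hl j Ij).1.
have t0 : (0 < fine S `^ (alpha / n%:R))%R by rewrite powR_gt0.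
apply: le_trans (lee_wpmul2r _ (GaRo_numerator_le n0 a0 adm ls)) _.
  by rewrite inver gt_eqF// lee_fin invr_ge0 ltW.
by rewrite inver gt_eqF// muleAC -EFinM mulfK ?gt_eqF.
Qed.

End gagliardo_bound.

Theorem mainTheorem8 (R : realType) (n : nat) (alpha q q' : R)
  (f : n.-tuple R -> R) :
  (0 < n)%N -> 0 < alpha < 1 ->
  q^-1 = 1 - alpha / n%:R -> q^-1 + q'^-1 = 1 ->
  measurable_fun (@Q0 R n) f ->
  (W_alpha1 alpha f < +oo)%E ->
  (GaRo q' f <= ((n%:R) `^ ((n%:R + alpha) / 2))%:E * W_alpha1 alpha f)%E.
Proof.
move=> n0 /andP[a0 _] hq hqq' _ _.
have hq' : q'^-1 = alpha / n%:R by rewrite -[q'^-1](addKr q^-1) hqq' hq opprB subrK.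
apply: ge_ereal_sup => _ [I [a [l [adm ->]]]].
exact: GaRo_quot_le.
Qed.
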